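(* Let $r\in\mathbb Z_+$ be even, $\Gamma=\Gamma_{(r,r)}$, and $E\in\mathcal C_\Gamma\setminus\{-4,0,4\}$ with $E<0$. Let $\ell\ge1$ be maximal with $\lambda_\ell^\Gamma(0,0)<E$, and let $m\ge0$ be maximal with $\lambda_m^\Gamma(\pi,\pi)<E$ (with the convention $\lambda_0^\Gamma(\pi,\pi)=-\infty$). Then there exist $(\theta_1,\varphi_1),(\theta_2,\varphi_2)\in[0,\pi]^2$ and integers $n_1,n_2\ge0$ such that $\lambda^\Gamma_{\ell+2n_1}(\theta_1,\varphi_1)<E<\lambda^\Gamma_{\ell+2n_1+1}(\theta_1,\varphi_1)$ and $\lambda^\Gamma_{m+2n_2}(\theta_2,\varphi_2)<E<\lambda^\Gamma_{m+2n_2+1}(\theta_2,\varphi_2)$.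
   Context: For $r\ge3$ and $\theta\in\mathbb R$, $\Delta_\theta^r\in\mathbb C^{r\times r}$ is the Hermitian matrix with $1$ on the sub- and superdiagonals, $0$ on the diagonal, entry $e^{-i\theta}$ in position $(1,r)$ and $e^{i\theta}$ in position $(r,1)$, all other entries $0$; $\Delta_\theta^2=\begin{bmatrix}0&1+e^{-i\theta}\\1+e^{i\theta}&0\end{bmatrix}$. $\Gamma=\Gamma_{(r,r)}$, $\Delta^\Gamma_{\theta,\varphi}=\Delta_\theta^r\otimes I_r+I_r\otimes\Delta_\varphi^r$, with eigenvalues $\lambda_1^\Gamma(\theta,\varphi)\le\cdots\le\lambda_{r^2}^\Gamma(\theta,\varphi)$ counted with multiplicity (and $\lambda_0^\Gamma:=-\infty$). $\mathcal C_r=\{2\cos(\pi j/r): j\in\mathbb Z,\ 0\le j\le r\}$ and $\mathcal C_\Gamma=\{a+b:a,b\in\mathcal C_r\}$. *)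

From HB Require Import structures.
From Stdlib Require Import Reals Lra ClassicalEpsilon FunctionalExtensionality.
From mathcomp Require Import all_boot all_order all_algebra.
Set Implicit Arguments. Unset Strict Implicit. Unset Printing Implicit Defensive.

Definition Reqb (x y : R) : bool := if Req_EM_T x y then true else false.
Lemma ReqbP : Equality.axiom Reqb.
Proof. by move=> x y; rewrite /Reqb; case: Req_EM_T => h; constructor. Qed.
HB.instance Definition _ := hasDecEq.Build R ReqbP.

Definition Rfind (P : pred R) (n : nat) : option R :=
  match excluded_middle_informative (exists x, P x) with
  | left H => Some (proj1_sig (constructive_indefinite_description _ H))
  | right _ => None
  end.
Lemma Rfind_correct P n x : Rfind P n = Some x -> P x.
Proof.
rewrite /Rfind; case: excluded_middle_informative => // H [<-].
exact: proj2_sig (constructive_indefinite_description _ H).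
Qed.
Lemma Rfind_complete (P : pred R) : (exists x, P x) -> exists n, Rfind P n.
Proof. by move=> H; exists 0%N; rewrite /Rfind; case: excluded_middle_informative. Qed.
Lemma Rfind_ext (P Q : pred R) : P =1 Q -> Rfind P =1 Rfind Q.
Proof. by move=> /functional_extensionality ->. Qed.
HB.instance Definition _ :=
  hasChoice.Build R Rfind_correct Rfind_complete Rfind_ext.

Definition C := (R * R)%type.
HB.instance Definition _ := Choice.on C.

Definition C0 : C := (R0, R0).
Definition C1 : C := (R1, R0).
Definition Cadd (a b : C) : C := (Rplus a.1 b.1, Rplus a.2 b.2).
Definition Copp (a : C) : C := (Ropp a.1, Ropp a.2).
Definition Cmul (a b : C) : C :=
  (Rminus (Rmult a.1 b.1) (Rmult a.2 b.2), Rplus (Rmult a.1 b.2) (Rmult a.2 b.1)).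

Lemma CaddA : associative Cadd.
Proof. by case=> ? ?; case=> ? ?; case=> ? ?; rewrite /Cmul /Cadd /C0 /C1 /Copp /=; f_equal; ring. Qed.
Lemma CaddC : commutative Cadd.
Proof. by case=> ? ?; case=> ? ?; rewrite /Cmul /Cadd /C0 /C1 /Copp /=; f_equal; ring. Qed.
Lemma Cadd0 : left_id C0 Cadd.
Proof. by case=> ? ?; rewrite /Cmul /Cadd /C0 /C1 /Copp /=; f_equal; ring. Qed.
Lemma CaddN : left_inverse C0 Copp Cadd.
Proof. by case=> ? ?; rewrite /Cmul /Cadd /C0 /C1 /Copp /=; f_equal; ring. Qed.
HB.instance Definition _ := GRing.isZmodule.Build C CaddA CaddC Cadd0 CaddN.

Lemma CmulA : associative Cmul.
Proof. by case=> ? ?; case=> ? ?; case=> ? ?; rewrite /Cmul /Cadd /C0 /C1 /Copp /=; f_equal; ring. Qed.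
Lemma CmulC : commutative Cmul.
Proof. by case=> ? ?; case=> ? ?; rewrite /Cmul /Cadd /C0 /C1 /Copp /=; f_equal; ring. Qed.
Lemma Cmul1 : left_id C1 Cmul.
Proof. by case=> ? ?; rewrite /Cmul /Cadd /C0 /C1 /Copp /=; f_equal; ring. Qed.
Lemma CmulDl : left_distributive Cmul Cadd.
Proof. by case=> ? ?; case=> ? ?; case=> ? ?; rewrite /Cmul /Cadd /C0 /C1 /Copp /=; f_equal; ring. Qed.
Lemma C1_neq0 : C1 != C0.
Proof.
apply/eqP => -[] H; move: H; exact: R1_neq_R0.
Qed.
HB.instance Definition _ :=
  GRing.Zmodule_isComNzRing.Build C CmulA CmulC Cmul1 CmulDl C1_neq0.

Local Open Scope ring_scope.
Definition Cr (x : R) : C := (x, R0).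
Definition expi (t : R) : C := (cos t, sin t).

(* For r >= 3 this is
   exactly the paper's definition; for r = 2 the contributions add up to the
   paper's [[0, 1+e^{-i theta}], [1+e^{i theta}, 0]]. *)
Definition deltaE (r : nat) (t : R) (i j : nat) : C :=
  ((j == i.+1)%:R + (i == j.+1)%:R
   + (if (i == 0%N) && (j == r.-1) then expi (Ropp t) else 0)
   + (if (i == r.-1) && (j == 0%N) then expi t else 0))%R.

Definition Delta (r : nat) (t : R) : 'M[C]_r := \matrix_(i < r, j < r) deltaE r t i j.

(* Delta^Gamma_{theta,phi} = Delta_theta (x) I_r + I_r (x) Delta_phi, with the
   standard Kronecker indexing (i,j) <-> i*r + j of 'I_(r*r). *)
Definition DeltaG (r : nat) (t p : R) : 'M[C]_(r * r) :=
  \matrix_(k < r * r, l < r * r)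
    (deltaE r t (k %/ r)%N (l %/ r)%N * ((k %% r)%N == (l %% r)%N)%:R
     + ((k %/ r)%N == (l %/ r)%N)%:R * deltaE r p (k %% r)%N (l %% r)%N)%R.

Definition Rleb (x y : R) : bool := if Rle_dec x y then true else false.

(* s is the nondecreasing list of the eigenvalues (with algebraic multiplicity,
   all real) of A: the characteristic polynomial det(x I - A) factors as
   prod_{y in s} (x - y). *)
Definition is_spectrum (n : nat) (A : 'M[C]_n) (s : seq R) : Prop :=
  size s = n /\ sorted Rleb s /\
  forall x : R, \det ((Cr x)%:M - A) = (\prod_(y <- s) (Cr x - Cr y))%R.

Definition eigs (n : nat) (A : 'M[C]_n) : seq R :=
  epsilon (inhabits [::]) (is_spectrum A).

(* lamG r t p k = lambda_k^Gamma(t,p) for 1 <= k <= r^2 (1-based index). *)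
Definition lamG (r : nat) (t p : R) (k : nat) : R :=
  nth R0 (eigs (DeltaG r t p)) k.-1.

(* DeltaG_{t,p} is diagonalised by tensor products of discrete
   Fourier vectors; its eigenvalues are 2 cos ((t + 2 pi a) / r) + 2 cos ((p + 2 pi b) / r)
   for a, b < r.  Starting from (t0, t0), t0 = 0 or pi, move along the curve
   (t0 + s h^3, t0 + s h^2), s = +-1.  For small h an eigenvalue different from E
   stays on its side of E, while an eigenvalue equal to E leaves it downwards iff the
   sine of its second angle (times s) is positive, or vanishes and the sine of the
   first angle is positive; E <> -4, 0, 4 excludes that both sines vanish.  The
   reflection of the Fourier indices fixing t0 preserves the cosines and flips the
   sines, and together with E < 0 this makes the number of eigenvalues leaving E
   downwards even.  So at the perturbed point E is not an eigenvalue, and the number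
   of eigenvalues below E exceeds the one at (t0, t0) by an even number. *)

From Stdlib Require Import Reals Lra Lia ClassicalEpsilon.
From mathcomp Require Import all_boot all_algebra zify.
Import GRing.Theory.

Local Open Scope ring_scope.

Lemma CaddE (a b : C) : a + b = Cadd a b. Proof. by []. Qed.
Lemma CmulE (a b : C) : a * b = Cmul a b. Proof. by []. Qed.
Lemma CoppE (a : C) : - a = Copp a. Proof. by []. Qed.

Ltac Csimpl := rewrite ?CaddE ?CmulE ?CoppE /Cadd /Cmul /Copp /Cr /expi /=.

Lemma Cr_add (x y : R) : Cr (Rplus x y) = Cr x + Cr y.
Proof. by Csimpl; f_equal; ring. Qed.
Lemma Cr_mul (x y : R) : Cr (Rmult x y) = Cr x * Cr y.
Proof. by Csimpl; f_equal; ring. Qed.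
Lemma Cr_sub (x y : R) : Cr (Rminus x y) = Cr x - Cr y.
Proof. by Csimpl; f_equal; ring. Qed.
Lemma Cr_inj : injective Cr.
Proof. by move=> x y []. Qed.

Lemma Cr_natr (n : nat) : n%:R = Cr (INR n).
Proof. by elim: n => [|n IH] //; rewrite -addn1 natrD IH plus_INR Cr_add. Qed.

Definition Cinv (z : C) : C :=
  let n := Rplus (Rmult z.1 z.1) (Rmult z.2 z.2) in (Rdiv z.1 n, Ropp (Rdiv z.2 n)).

Lemma CmulV (z : C) : z <> 0 -> z * Cinv z = 1.
Proof.
case: z => u v z0; have n0 : Rplus (Rmult u u) (Rmult v v) <> R0.
  by move=> n0; apply: z0; congr pair; nra.
by rewrite CmulE /Cmul /Cinv /=; congr pair; field.
Qed.

Lemma Cmul_eq0_l (a z : C) : z <> 0 -> a * z = 0 -> a = 0.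
Proof. by move=> /CmulV zV az0; rewrite -[a]mulr1 -zV mulrA az0 mul0r. Qed.

Lemma expiD (x y : R) : expi x * expi y = expi (Rplus x y).
Proof. by Csimpl; rewrite cos_plus sin_plus; f_equal; ring. Qed.
Lemma expi0 : expi R0 = 1.
Proof. by rewrite /expi cos_0 sin_0. Qed.
Lemma expiNK (t : R) : expi (Ropp t) * expi t = 1.
Proof. by rewrite expiD Rplus_opp_l expi0. Qed.
Lemma expi_period (x : R) (k : nat) : expi (Rplus x (Rmult (Rmult 2 (INR k)) PI)) = expi x.
Proof. by rewrite /expi cos_period sin_period. Qed.
Lemma expi_2PI (k : nat) : expi (Rmult (Rmult 2 (INR k)) PI) = 1.
Proof. by rewrite -[X in expi X]Rplus_0_l expi_period expi0. Qed.

Lemma expiD_expiB (x a : R) :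
  expi (Rplus x a) + expi (Rminus x a) = Cr (Rmult 2 (cos a)) * expi x.
Proof.
Csimpl; rewrite /Rminus !cos_plus !sin_plus cos_neg sin_neg.
by f_equal; ring.
Qed.

Lemma expi_sum_geom_eq0 (n : nat) (x : R) :
  expi (Rmult (INR n) x) = 1 -> expi x <> 1 ->
  \sum_(a < n) expi (Rmult (INR a) x) = 0.
Proof.
move=> xn1 x1; apply: (@Cmul_eq0_l _ (expi x - 1)); first by move/subr0_eq.
rewrite mulrBr mulr1 mulr_suml.
have -> : \sum_(a < n) (expi (Rmult (INR a) x) * expi x)
          = \sum_(a < n.+1) expi (Rmult (INR a) x) - 1.
  rewrite big_ord_recl (_ : Rmult (INR (@ord0 n)) x = R0) ?expi0; last exact: Rmult_0_l.
  rewrite [1 + _]addrC addrK.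
  apply: eq_bigr => a _; rewrite expiD; congr expi.
  by rewrite (_ : INR (lift ord0 a) = INR a.+1) // S_INR; ring.
by rewrite big_ord_recr /= xn1 addrK subrr.
Qed.

Lemma sum_ord_indicator (n c : nat) (v : nat -> C) :
  \sum_(b < n) ((nat_of_ord b == c)%:R * v b) = if (c < n)%N then v c else 0.
Proof.
elim: n => [|n IH]; first by rewrite big_ord0.
rewrite big_ord_recr /= IH; case: (ltngtP c n) => [cn|nc|->].
- by rewrite (ltn_trans cn (ltnSn n)) mul0r addr0.
- by rewrite ltnNge nc mul0r addr0.
- by rewrite ltnSn mul1r add0r.
Qed.

Lemma sum_ord_indicator_if (n c : nat) (P : bool) (w : C) (v : nat -> C) :
  \sum_(b < n) ((if P && (nat_of_ord b == c) then w else 0) * v b)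
  = if P && (c < n)%N then w * v c else 0.
Proof.
case: P; last by rewrite big1 // => b _; rewrite mul0r.
transitivity (w * \sum_(b < n) ((nat_of_ord b == c)%:R * v b)).
  by rewrite mulr_sumr; apply: eq_bigr => b _; case: eqP; rewrite ?mul1r ?mul0r ?mulr0.
by rewrite sum_ord_indicator; case: ifP; rewrite ?mulr0.
Qed.

(** * Eigenvectors of [Delta] and [DeltaG] *)

Lemma deltaE_sum (r a : nat) (t : R) (v : nat -> C) :
  \sum_(b < r) (deltaE r t a b * v b) =
    (if (a.+1 < r)%N then v a.+1 else 0)
  + (if (0 < a)%N && (a.-1 < r)%N then v a.-1 else 0)
  + (if (a == 0%N) && (r.-1 < r)%N then expi (Ropp t) * v r.-1 else 0)
  + (if (a == r.-1) && (0 < r)%N then expi t * v 0%N else 0).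
Proof.
have sum_pred : \sum_(b < r) ((a == (nat_of_ord b).+1)%:R * v b)
    = if (0 < a)%N && (a.-1 < r)%N then v a.-1 else 0.
  rewrite -[in RHS](mul1r (v a.-1)) -sum_ord_indicator_if.
  by apply: eq_bigr => b _; case: a => [|a] //=; rewrite eqSS eq_sym; case: eqP.
rewrite /deltaE; under eq_bigr do rewrite !mulrDl.
by rewrite !big_split /= sum_ord_indicator sum_pred !sum_ord_indicator_if.
Qed.

Lemma INR_pred (a : nat) : (0 < a)%N -> INR a.-1 = Rminus (INR a) 1.
Proof. by case: a => // a _; rewrite S_INR /=; lra. Qed.

Lemma deltaE_expi_eigen (r : nat) (t x : R) (a : nat) :
  (1 < r)%N -> (a < r)%N -> expi (Rmult (INR r) x) = expi t ->
  \sum_(b < r) (deltaE r t a b * expi (Rmult (INR b) x))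
  = Cr (Rmult 2 (cos x)) * expi (Rmult (INR a) x).
Proof.
move=> r1 ar wrap.
rewrite (deltaE_sum r a t (fun b => expi (Rmult (INR b) x))); cbv beta.
have r0 : (0 < r)%N by apply: ltn_trans r1.
have r1r : (r.-1 < r)%N by rewrite prednK.
have r10 : (0 < r.-1)%N by rewrite -ltnS prednK.
rewrite r1r (ltnW r1) !andbT.
have [->|a0] := eqVneq a 0%N.
  rewrite r1 ltnn /= eq_sym (gtn_eqF r10) !addr0.
  have -> : expi (Ropp t) * expi (Rmult (INR r.-1) x) = expi (Ropp x).
    rewrite (_ : Rmult (INR r.-1) x = Rplus (Rmult (INR r) x) (Ropp x)); last first.
      by rewrite INR_pred //; ring.
    by rewrite -expiD wrap mulrA expiNK mul1r.
  rewrite Rmult_0_l expi0 mulr1 -[Cr _]mulr1 -expi0 -expiD_expiB.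
  by congr (expi _ + expi _); ring.
rewrite lt0n a0 (leq_ltn_trans (leq_pred a) ar) andTb addr0.
have [ar1|ar1] := eqVneq a r.-1.
  rewrite ar1 (prednK r0) ltnn add0r Rmult_0_l expi0 mulr1 -wrap addrC.
  rewrite (_ : Rmult (INR r) x = Rplus (Rmult (INR r.-1) x) x); last first.
    by rewrite INR_pred //; ring.
  rewrite -expiD_expiB; congr (expi _ + expi _).
  by rewrite !INR_pred // ?ltn_predRL //; ring.
have -> : (a.+1 < r)%N by rewrite ltn_neqAle ar andbT; apply: contra ar1 => /eqP <-.
rewrite addr0 -expiD_expiB; congr (expi _ + expi _).
  by rewrite S_INR; ring.
by rewrite INR_pred ?lt0n //; ring.
Qed.

Definition fourier_angle (r : nat) (t : R) (j : nat) : R :=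
  Rdiv (Rplus t (Rmult (Rmult 2 (INR j)) PI)) (INR r).
Definition fourier_vec (r : nat) (t : R) (j a : nat) : C :=
  expi (Rmult (INR a) (fourier_angle r t j)).
Definition fourier_eigval (r : nat) (t : R) (j : nat) : R :=
  Rmult 2 (cos (fourier_angle r t j)).

Lemma INR_neq0 {r : nat} : (0 < r)%N -> INR r <> R0.
Proof. by move=> r0; apply: not_0_INR => r_eq0; rewrite r_eq0 in r0. Qed.

Lemma Delta_fourier_vec (r : nat) (t : R) (j a : nat) : (1 < r)%N -> (a < r)%N ->
  \sum_(b < r) (deltaE r t a b * fourier_vec r t j b)
  = Cr (fourier_eigval r t j) * fourier_vec r t j a.
Proof.
move=> r1 ar; apply: deltaE_expi_eigen => //.
rewrite /fourier_angle (_ : Rmult (INR r) _ = Rplus t (Rmult (Rmult 2 (INR j)) PI)).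
  exact: expi_period.
by field; apply/INR_neq0/(ltn_trans _ r1).
Qed.

Lemma big_ord_mul_pair (T : Type) (idx : T) (op : Monoid.law idx) (r : nat)
    (F : nat -> T) :
  \big[op/idx]_(K < r * r) F K
  = \big[op/idx]_(a < r) \big[op/idx]_(b < r) F (a * r + b)%N.
Proof.
rewrite -(big_mkord xpredT F).
suff sumP n : \big[op/idx]_(0 <= K < n * r) F K
   = \big[op/idx]_(a < n) \big[op/idx]_(b < r) F (a * r + b)%N by apply: sumP.
elim: n => [|n IH]; first by rewrite mul0n big_geq // big_ord0.
rewrite big_ord_recr /= -IH mulSnr (@big_cat_nat _ _ _ (n * r)%N 0%N _ _ _ (leq0n _) (leq_addr _ _)) /=.
congr (op _ _); rewrite -{1}[(n * r)%N]add0n big_addn addKn.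
by rewrite (big_mkord xpredT (fun i => F (i + n * r)%N)); apply: eq_bigr => b _; rewrite addnC.
Qed.

Lemma divn_pair (r a b : nat) : (b < r)%N -> ((a * r + b) %/ r)%N = a.
Proof. by move=> br; rewrite divnMDl ?divn_small ?addn0 // (leq_ltn_trans _ br). Qed.
Lemma modn_pair (r a b : nat) : (b < r)%N -> ((a * r + b) %% r)%N = b.
Proof. by move=> br; rewrite modnMDl modn_small. Qed.

(* As in [DeltaG], the index L < r * r stands for the pair (L / r, L mod r). *)
Definition DeltaG_eigval (r : nat) (t p : R) (L : nat) : R :=
  Rplus (fourier_eigval r t (L %/ r)%N) (fourier_eigval r p (L %% r)%N).

Definition DeltaG_eigvec_mx (r : nat) (t p : R) : 'M[C]_(r * r) :=
  \matrix_(K, L) (fourier_vec r t (L %/ r)%N (K %/ r)%N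
                  * fourier_vec r p (L %% r)%N (K %% r)%N).

Lemma DeltaG_eigvec (r : nat) (t p : R) : (1 < r)%N ->
  DeltaG r t p *m DeltaG_eigvec_mx r t p
  = DeltaG_eigvec_mx r t p *m diag_mx (\row_L Cr (DeltaG_eigval r t p L)).
Proof.
move=> r1; have r0 : (0 < r)%N by apply: ltn_trans r1.
apply/matrixP => K L; rewrite mul_mx_diag !mxE.
set u := fourier_vec r t (L %/ r)%N; set v := fourier_vec r p (L %% r)%N.
have Kq : (K %/ r < r)%N by rewrite ltn_divLR.
have Kr : (K %% r < r)%N by rewrite ltn_mod.
have indicator_sum c (w : nat -> C) : (c < r)%N ->
    \sum_(b < r) ((c == nat_of_ord b)%:R * w b) = w c.
  move=> cr; have := sum_ord_indicator r c w; rewrite cr => <-.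
  by apply: eq_bigr => b _; rewrite eq_sym.
pose G n := deltaE r t (K %/ r) (n %/ r) * ((K %% r)%N == (n %% r)%N)%:R
             + ((K %/ r)%N == (n %/ r)%N)%:R * deltaE r p (K %% r) (n %% r).
transitivity (\sum_(n < r * r) G n * (u (n %/ r)%N * v (n %% r)%N)).
  by apply: eq_bigr => n _; rewrite !mxE.
rewrite (@big_ord_mul_pair _ _ _ _ (fun n => G n * (u (n %/ r)%N * v (n %% r)%N))) /G.
transitivity (\sum_(a < r) \sum_(b < r)
   (deltaE r t (K %/ r) a * u a * (((K %% r)%N == b)%:R * v b)
  + ((K %/ r)%N == a)%:R * u a * (deltaE r p (K %% r) b * v b))).
  apply: eq_bigr => a _; apply: eq_bigr => b _.
  rewrite !divn_pair ?modn_pair ?ltn_ord // mulrDl.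
  by congr (_ + _); rewrite -!mulrA; congr (_ * _); rewrite mulrCA.
under eq_bigr do rewrite big_split /= -!mulr_sumr indicator_sum //.
rewrite big_split /= -!mulr_suml Delta_fourier_vec // indicator_sum //.
rewrite Delta_fourier_vec // /DeltaG_eigval Cr_add mulrDr.
rewrite -/u -/v; congr (_ + _); first by rewrite [RHS]mulrC mulrA.
by rewrite [RHS]mulrC mulrCA.
Qed.

Lemma cos_double_lt1 (y : R) : Rlt (Ropp PI) y -> Rlt y PI -> y <> R0 ->
  Rlt (cos (Rmult 2 y)) 1.
Proof.
move=> y_gt y_lt y0; rewrite cos_2a_sin.
suff : sin y <> R0 by move=> s0; have : Rlt R0 (Rmult (sin y) (sin y)); nra.
move=> s0; case: (Rlt_le_dec R0 y) => y_pos.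
  by move: (sin_gt_0 y y_pos y_lt); rewrite s0; lra.
by move: (sin_lt_0_var y y_gt ltac:(lra)); rewrite s0; lra.
Qed.

Definition fourier_covec (r : nat) (t : R) (j a : nat) : C :=
  expi (Ropp (Rmult (INR a) (fourier_angle r t j))).

Lemma fourier_orthogonal (r : nat) (t : R) (j j' : nat) :
  (0 < r)%N -> (j < r)%N -> (j' < r)%N ->
  \sum_(a < r) (fourier_covec r t j a * fourier_vec r t j' a)
  = if j == j' then Cr (INR r) else 0.
Proof.
move=> r0 jr j'r; have r0R := INR_neq0 r0.
have [<-|jj'] := eqVneq j j'.
  under eq_bigr do rewrite /fourier_covec /fourier_vec expiNK.
  by rewrite sumr_const card_ord Cr_natr.
set x := Rdiv (Rmult (Rmult 2 PI) (Rminus (INR j') (INR j))) (INR r).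
have termE a : fourier_covec r t j a * fourier_vec r t j' a = expi (Rmult (INR a) x).
  by rewrite /fourier_covec /fourier_vec expiD /x /fourier_angle; congr expi; field.
under eq_bigr do rewrite termE.
apply: expi_sum_geom_eq0.
  rewrite /x (_ : Rmult (INR r) _ = Rplus (Rmult (Rmult 2 (INR j')) PI)
                                      (Ropp (Rmult (Rmult 2 (INR j)) PI))); last by field.
  by rewrite -expiD expi_2PI mul1r -[LHS]mul1r -{1}(expi_2PI j) mulrC expiNK.
case=> cos_x1 _; move: cos_x1; apply: Rlt_not_eq.
rewrite /x (_ : Rdiv _ _ = Rmult 2 (Rdiv (Rmult PI (Rminus (INR j') (INR j))) (INR r))); last by field.
have r_pos : Rlt R0 (INR r) by apply/lt_0_INR/ltP.
have jlt : Rlt (INR j) (INR r) by apply/lt_INR/ltP.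
have j'lt : Rlt (INR j') (INR r) by apply/lt_INR/ltP.
have := pos_INR j; have := pos_INR j'; have := PI_RGT_0.
have jj'R : INR j' <> INR j by move/INR_eq => jE; rewrite jE eqxx in jj'.
move=> PI_pos j'0 j0; apply: cos_double_lt1.
- apply: (Rmult_lt_reg_r (INR r)) => //; rewrite /Rdiv Rmult_assoc Rinv_l //; nra.
- apply: (Rmult_lt_reg_r (INR r)) => //; rewrite /Rdiv Rmult_assoc Rinv_l //; nra.
- move/(Rmult_eq_compat_r (INR r)); rewrite /Rdiv Rmult_assoc Rinv_l // Rmult_0_l Rmult_1_r.
  by case/Rmult_integral; lra.
Qed.

Definition DeltaG_eigvec_inv_mx (r : nat) (t p : R) : 'M[C]_(r * r) :=
  \matrix_(L, K) (Cr (Rinv (Rmult (INR r) (INR r)))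
     * (fourier_covec r t (L %/ r)%N (K %/ r)%N * fourier_covec r p (L %% r)%N (K %% r)%N)).

Lemma DeltaG_eigvec_inv (r : nat) (t p : R) : (0 < r)%N ->
  DeltaG_eigvec_inv_mx r t p *m DeltaG_eigvec_mx r t p = 1%:M.
Proof.
move=> r0; apply/matrixP => L L'; rewrite !mxE.
have r0R := INR_neq0 r0.
have Lq (M : 'I_(r * r)) : (M %/ r < r)%N by rewrite ltn_divLR.
have Lr (M : 'I_(r * r)) : (M %% r < r)%N by rewrite ltn_mod.
set c := Cr (Rinv (Rmult (INR r) (INR r))).
pose f n := c * ((fourier_covec r t (L %/ r) (n %/ r) * fourier_vec r t (L' %/ r) (n %/ r))
     * (fourier_covec r p (L %% r) (n %% r) * fourier_vec r p (L' %% r) (n %% r))).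
transitivity (\sum_(K < r * r) f K).
  apply: eq_bigr => K _; rewrite !mxE /f -!mulrA; congr (_ * _).
  by rewrite !mulrA; congr (_ * _); rewrite -!mulrA; congr (_ * _); rewrite mulrC.
rewrite big_ord_mul_pair /f.
transitivity (c * ((\sum_(a < r) (fourier_covec r t (L %/ r) a * fourier_vec r t (L' %/ r) a))
                 * (\sum_(b < r) (fourier_covec r p (L %% r) b * fourier_vec r p (L' %% r) b)))).
  rewrite mulr_suml mulr_sumr; apply: eq_bigr => a _.
  rewrite !mulr_sumr; apply: eq_bigr => b _.
  by rewrite divn_pair ?modn_pair.
rewrite !fourier_orthogonal //.
have -> : (L == L') = ((L %/ r)%N == (L' %/ r)%N) && ((L %% r)%N == (L' %% r)%N).
  apply/eqP/andP => [-> //|[/eqP qE /eqP rE]]; apply: val_inj => /=.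
  by rewrite (divn_eq L r) (divn_eq L' r) qE rE.
case: eqP => _; case: eqP => _ /=; rewrite ?(mulr0, mul0r) //.
by rewrite /c -!Cr_mul; congr Cr; field.
Qed.

Lemma det_DeltaG (r : nat) (t p x : R) : (1 < r)%N ->
  \det ((Cr x)%:M - DeltaG r t p)
  = \prod_(L < r * r) (Cr x - Cr (DeltaG_eigval r t p L)).
Proof.
move=> r1; have r0 : (0 < r)%N by apply: ltn_trans r1.
set P := DeltaG_eigvec_mx r t p.
pose d : 'rV[C]_(r * r) := \row_L Cr (DeltaG_eigval r t p L).
have conj : ((Cr x)%:M - DeltaG r t p) *m P = P *m ((Cr x)%:M - diag_mx d).
  by rewrite mulmxBl mulmxBr mul_scalar_mx mul_mx_scalar DeltaG_eigvec.
have detP : \det (DeltaG_eigvec_inv_mx r t p) * \det P = 1.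
  by rewrite -det_mulmx DeltaG_eigvec_inv // det1.
have diag_sub : (Cr x)%:M - diag_mx d = diag_mx (\row_L (Cr x - Cr (DeltaG_eigval r t p L))).
  by apply/matrixP => i j; rewrite !mxE; case: eqP => _; rewrite ?mulr1n ?mulr0n ?subrr.
have := congr1 determinant conj; rewrite !det_mulmx diag_sub det_diag => detE.
rewrite -[LHS]mulr1 -detP mulrCA detE mulrA detP mul1r.
by apply: eq_bigr => i _; rewrite mxE.
Qed.

Local Close Scope ring_scope.
Local Open Scope R_scope.

(** * Uniqueness of the sorted spectrum *)

Definition Rprod (s : seq R) (x : R) : R := foldr (fun y acc => (x - y) * acc) 1 s.

Lemma Cr_Rprod (s : seq R) (x : R) :
  (\prod_(y <- s) (Cr x - Cr y))%R = Cr (Rprod s x).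
Proof. by elim: s => [|y s IH]; rewrite ?big_nil ?big_cons // IH /= Cr_mul Cr_sub. Qed.

Lemma Rprod_continuity (s : seq R) (x : R) : continuity_pt (Rprod s) x.
Proof.
elim: s => [|y s IH] /=; first exact: continuity_pt_const.
apply: (continuity_pt_mult (fun z => z - y)) => //.
apply: continuity_pt_minus; last exact: continuity_pt_const.
exact: derivable_continuous_pt (derivable_pt_id x).
Qed.

Lemma continuity_pt_eq {f g : R -> R} {y : R} :
  continuity_pt f y -> continuity_pt g y ->
  (forall x, x <> y -> f x = g x) -> f y = g y.
Proof.
move=> fc gc fg; apply: (single_limit g (D_x no_cond y) (f y) (g y) y) => //.
  move=> e e0; exists (y + e / 2); split; first by split=> //; lra.
  by rewrite /Rdist Rabs_right; lra.
by apply: limit1_ext fc => x [_ /nesym]; apply: fg.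
Qed.

Lemma Rprod_root (s : seq R) (y : R) : Rprod s y = 0 -> y \in s.
Proof.
elim: s => [|z s IH] /=; first lra.
by case/Rmult_integral => [yz|/IH ys]; rewrite in_cons ?ys ?orbT // (_ : y = z) ?eqxx //; lra.
Qed.

Lemma Rprod_perm {s1 s2 : seq R} : perm_eq s1 s2 -> Rprod s1 =1 Rprod s2.
Proof. by move=> s12 x; apply: Cr_inj; rewrite -!Cr_Rprod (perm_big _ s12). Qed.

Lemma Rprod_inj (s1 s2 : seq R) : Rprod s1 =1 Rprod s2 -> perm_eq s1 s2.
Proof.
elim: s1 s2 => [|y s1 IH] s2 s12.
  case: s2 s12 => [|z s2] // s12.
  by have := s12 z; rewrite /= Rminus_diag Rmult_0_l; lra.
have ys2 : y \in s2 by apply: Rprod_root; rewrite -s12 /= Rminus_diag Rmult_0_l.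
have s2E := perm_to_rem ys2.
have off_y x : x <> y -> Rprod s1 x = Rprod (rem y s2) x.
  move=> xy; have := s12 x; rewrite (Rprod_perm s2E) /= => eq_xy.
  by apply: (Rmult_eq_reg_l (x - y)) => //; lra.
have eq_all x : Rprod s1 x = Rprod (rem y s2) x.
  have [->|] := Req_dec x y; last exact: off_y.
  exact: continuity_pt_eq (Rprod_continuity _ _) (Rprod_continuity _ _) off_y.
apply: (@perm_trans _ (y :: rem y s2)); last by rewrite perm_sym.
by rewrite perm_cons IH.
Qed.

Lemma RlebP (x y : R) : reflect (x <= y) (Rleb x y).
Proof. by rewrite /Rleb; case: Rle_dec => h; constructor. Qed.
Lemma Rleb_total : total Rleb.
Proof. by move=> x y; apply/orP; case: (Rle_lt_dec x y) => h; [left|right]; apply/RlebP; lra. Qed.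
Lemma Rleb_trans : transitive Rleb.
Proof. by move=> y x z /RlebP xy /RlebP yz; apply/RlebP; lra. Qed.
Lemma Rleb_anti : antisymmetric Rleb.
Proof. by move=> x y /andP[/RlebP xy /RlebP yx]; lra. Qed.

Lemma is_spectrum_unique {n : nat} {A : 'M[C]_n} {s1 s2 : seq R} :
  is_spectrum A s1 -> is_spectrum A s2 -> s1 = s2.
Proof.
move=> [_ [sorted1 det1]] [_ [sorted2 det2]].
apply: (sorted_eq Rleb_trans Rleb_anti sorted1 sorted2).
by apply: Rprod_inj => x; apply: Cr_inj; rewrite -!Cr_Rprod -det1 -det2.
Qed.

Definition DeltaG_spectrum (r : nat) (t p : R) : seq R :=
  sort Rleb [seq DeltaG_eigval r t p n | n <- iota 0 (r * r)].

Lemma size_DeltaG_spectrum (r : nat) (t p : R) : size (DeltaG_spectrum r t p) = (r * r)%N.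
Proof. by rewrite size_sort size_map size_iota. Qed.

Lemma sorted_DeltaG_spectrum (r : nat) (t p : R) : sorted Rleb (DeltaG_spectrum r t p).
Proof. exact: (sort_sorted Rleb_total). Qed.

Lemma is_spectrum_DeltaG (r : nat) (t p : R) : (1 < r)%N ->
  is_spectrum (DeltaG r t p) (DeltaG_spectrum r t p).
Proof.
move=> r1; split; [exact: size_DeltaG_spectrum | split; first exact: sorted_DeltaG_spectrum].
move=> x; rewrite det_DeltaG // (perm_big _ (permEl (perm_sort Rleb _))) big_map.
by rewrite -(big_mkord xpredT (fun L => Cr x - Cr (DeltaG_eigval r t p L)))%R /index_iota subn0.
Qed.

Lemma lamG_spectrum (r : nat) (t p : R) (k : nat) : (1 < r)%N ->
  lamG r t p k = nth 0 (DeltaG_spectrum r t p) k.-1.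
Proof.
move=> r1; rewrite /lamG /eigs; congr nth.
symmetry; apply: (is_spectrum_unique (is_spectrum_DeltaG r t p r1)).
by apply: epsilon_spec; exists (DeltaG_spectrum r t p); apply: is_spectrum_DeltaG.
Qed.

Definition Rltb (x y : R) : bool := if Rlt_dec x y then true else false.
Lemma RltbP (x y : R) : reflect (x < y) (Rltb x y).
Proof. by rewrite /Rltb; case: Rlt_dec => h; constructor. Qed.

Section SortedCount.
Variables (E : R) (s : seq R).
Hypothesis s_sorted : sorted Rleb s.

Lemma sorted_nth_lt_count {i : nat} : (i < size s)%N ->
  nth 0 s i < E <-> (i < count (Rltb ^~ E) s)%N.
Proof.
elim: s s_sorted i => [|x s' IH] //= sorted_xs.
have x_le : all (Rleb x) s' by move: sorted_xs; rewrite (path_sortedE Rleb_trans) => /andP[].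
have {}IH := IH (path_sorted sorted_xs).
case: (RltbP x E) => [xE|xE] /=.
  by case=> [|i] //= i_lt; rewrite ltnS; apply: IH.
have -> : count (Rltb ^~ E) s' = 0%N.
  apply/eqP; rewrite -leqn0 leqNgt -has_count; apply/hasP => -[y ys /RltbP yE].
  by move/allP: x_le => /(_ y ys) /RlebP; lra.
case=> [|i] /= i_lt; split=> // iE; exfalso.
apply: xE; apply: Rle_lt_trans iE; apply/RlebP/(allP x_le)/mem_nth.
exact: (i_lt : (i < size s')%N).
Qed.

Lemma count_lt_maximal (l : nat) : (l <= size s)%N -> (l = 0%N \/ nth 0 s l.-1 < E) ->
  (forall k, (l < k)%N -> (k <= size s)%N -> ~ nth 0 s k.-1 < E) ->
  count (Rltb ^~ E) s = l.
Proof.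
move=> l_le l_lt l_max; apply/eqP; rewrite eqn_leq; apply/andP; split.
  have [l_size|] := ltnP l (size s); last by apply: leq_trans (count_size _ _).
  rewrite leqNgt; apply/negP => /(sorted_nth_lt_count l_size).2.
  exact: (l_max l.+1).
case: l_lt => [->|] //; case: l l_le {l_max} => // l l_le.
exact: (sorted_nth_lt_count l_le).1.
Qed.

Lemma count_lt_gap (c : nat) : count (Rltb ^~ E) s = c -> E \notin s -> (c < size s)%N ->
  (c = 0%N \/ nth 0 s c.-1 < E) /\ E < nth 0 s c.
Proof.
move=> sc Es c_lt; split.
  case: c sc c_lt => [|c] sc c_lt; [by left | right].
  by apply/(sorted_nth_lt_count (ltnW c_lt)); rewrite sc.
have : ~ nth 0 s c < E by move/(sorted_nth_lt_count c_lt); rewrite sc ltnn.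
have : nth 0 s c <> E by move=> cE; move: Es; rewrite -cE mem_nth.
lra.
Qed.

End SortedCount.

Lemma count_lt_DeltaG_spectrum (r : nat) (t p E : R) :
  count (Rltb ^~ E) (DeltaG_spectrum r t p)
  = (\sum_(n < r * r) Rltb (DeltaG_eigval r t p n) E)%N.
Proof.
rewrite /DeltaG_spectrum (permP (permEl (perm_sort Rleb _))) count_map.
rewrite -sum1_count big_mkcond /=.
rewrite -(big_mkord xpredT (fun n => (Rltb (DeltaG_eigval r t p n) E : nat))) /index_iota subn0.
by apply: eq_bigr => n _; case: ifP.
Qed.

Lemma count_lt_lamG (r : nat) (t E : R) (l : nat) : (1 < r)%N ->
  (l <= r * r)%N -> (l = 0%N \/ lamG r t t l < E) ->
  (forall k : nat, (l < k)%N -> (k <= r * r)%N -> ~ lamG r t t k < E) ->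
  count (Rltb ^~ E) (DeltaG_spectrum r t t) = l.
Proof.
move=> r1 l_le l_lt l_max.
apply: count_lt_maximal; rewrite ?size_DeltaG_spectrum //.
- exact: sorted_DeltaG_spectrum.
- by rewrite -lamG_spectrum.
- by move=> k lk kr; rewrite -lamG_spectrum //; apply: l_max.
Qed.

(** * Moving one eigenvalue along the curve *)

Definition eventually_pos (P : R -> Prop) : Prop :=
  exists2 d, 0 < d & forall h, 0 < h < d -> P h.

Lemma eventually_pos_forall (n : nat) (P : nat -> R -> Prop) :
  (forall i, (i < n)%N -> eventually_pos (P i)) ->
  eventually_pos (fun h => forall i, (i < n)%N -> P i h).
Proof.
elim: n => [|n IH] evP; first by exists 1; [lra | move=> h _ i; rewrite ltn0].
have [d1 d1_pos P1] := IH (fun i ilt => evP i (ltnW ilt)).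
have [d2 d2_pos P2] := evP n (ltnSn n).
exists (Rmin d1 d2) => [|h h_lt i]; first exact: Rmin_pos.
have := Rmin_l d1 d2; have := Rmin_r d1 d2.
rewrite ltnS leq_eqVlt => ? ? /orP[/eqP ->|ilt]; [apply: P2 | apply: P1] => //; lra.
Qed.

Lemma eventually_pos_small (P : R -> Prop) :
  eventually_pos P -> exists h, 0 < h < 1 /\ P h.
Proof.
move=> [d d_pos Pd]; have := Rmin_l d 1; have := Rmin_r d 1.
have := Rmin_pos d 1 d_pos Rlt_0_1; set e := Rmin d 1 => e_pos ? ?.
by exists (e / 2); split; [|apply: Pd]; lra.
Qed.

Lemma sin_small_bounds (u : R) : 0 <= u <= 1 -> u / 2 <= sin u <= u.
Proof.
move=> [u0 u1]; have [lb _] := sin_bound u 0 u0 ltac:(have := PI2_1; lra).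
split.
  move: lb; rewrite /sin_approx /sin_term /= => lb.
  have : u - u * u * u / 6 <= sin u by apply: Rle_trans lb; right; field.
  nra.
have [->|u_pos] := Req_dec u 0; first by rewrite sin_0; lra.
by apply/Rlt_le/sin_lt_x; lra.
Qed.

Lemma cos_shift_le (A w : R) : 0 <= w <= 1 -> - w <= cos (A + w) - cos A <= w.
Proof.
move=> w01; rewrite form2 (_ : (A + w - A) / 2 = w / 2); last by field.
have [lb ub] := sin_small_bounds (w / 2) ltac:(lra).
by have := SIN_bound ((A + w + A) / 2); split; nra.
Qed.

Lemma sin_shift_le (A w : R) : 0 <= w <= 1 -> - w <= sin (A + w) - sin A <= w.
Proof.
move=> w01; rewrite form4 (_ : (A + w - A) / 2 = w / 2); last by field.
have [lb ub] := sin_small_bounds (w / 2) ltac:(lra).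
by have := COS_bound ((A + w + A) / 2); split; nra.
Qed.

(* At a critical point of cos the first-order term vanishes. *)
Lemma cos_shift_flat (A w : R) : sin A = 0 -> 0 <= w <= 1 ->
  - (w * w / 2) <= cos (A + w) - cos A <= w * w / 2.
Proof.
move=> sA0 w01; rewrite cos_plus sA0 (_ : w = 2 * (w / 2)) ?cos_2a_sin; last by field.
have [lb ub] := sin_small_bounds (w / 2) ltac:(lra).
by have := COS_bound A; split; nra.
Qed.

Lemma cos_shift_descent (A w : R) : 0 < w <= 1 -> w <= Rabs (sin A) ->
  w * (sin A * sin A) / 4 <= (cos A - cos (A + w)) * sin A.
Proof.
move=> w01 w_sA.
rewrite form2 (_ : (A - (A + w)) / 2 = - (w / 2)); last by field.
rewrite (_ : (A + (A + w)) / 2 = A + w / 2); last by field.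
rewrite sin_neg.
have [lb _] := sin_small_bounds (w / 2) ltac:(lra).
have [dl du] := sin_shift_le A (w / 2) ltac:(lra).
have half : sin A * sin A / 2 <= sin (A + w / 2) * sin A.
  by case: (Rle_lt_dec 0 (sin A)) => sA;
    [rewrite Rabs_pos_eq in w_sA | rewrite Rabs_left in w_sA]; nra.
nra.
Qed.

Definition pair_shift (k A B h : R) : R :=
  2 * cos (A + h * h * h / k) + 2 * cos (B + h * h / k).

(* Whether the eigenvalue decreases along that curve: the h^2 shift of B wins
   unless sin B = 0, in which case the h^3 shift of A decides. *)
Definition descends (sinA sinB : R) : bool :=
  if sinB == 0 then Rltb 0 sinA else Rltb 0 sinB.

Lemma div_ge1_bounds (k x : R) : 1 <= k -> 0 < x -> 0 < x / k <= x.
Proof.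
move=> k1 x0; split; first by apply: Rdiv_lt_0_compat; lra.
by rewrite -[X in _ <= X]Rdiv_1_r; apply: Rmult_le_compat_l; [lra | apply: Rinv_le_contravar; lra].
Qed.

Lemma mul_le_Rabs (s : R) {x e : R} : - e <= x <= e -> x * s <= e * Rabs s.
Proof.
move=> xe; apply: Rle_trans (Rle_abs _) _; rewrite Rabs_mult.
by apply: Rmult_le_compat_r; [exact: Rabs_pos | apply: Rabs_le].
Qed.

Section PairShift.
Variables (k A B h : R).
Hypotheses (k1 : 1 <= k) (h01 : 0 < h <= 1).

Let w1 := h * h * h / k.
Let w2 := h * h / k.

Let w2_bounds : 0 < w2 <= h * h.
Proof. by apply: div_ge1_bounds; nra. Qed.
Let w1E : w1 = h * w2.
Proof. by rewrite /w1 /w2; field; lra. Qed.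

Lemma pair_shift_near :
  - (4 * h) <= pair_shift k A B h - (2 * cos A + 2 * cos B) <= 4 * h.
Proof.
have [dA1 dA2] := cos_shift_le A w1 ltac:(have := w2_bounds; nra).
have [dB1 dB2] := cos_shift_le B w2 ltac:(have := w2_bounds; nra).
by rewrite /pair_shift -/w1 -/w2; split; nra.
Qed.

Lemma pair_shift_sinB : 4 * h < Rabs (sin B) ->
  0 < (2 * cos A + 2 * cos B - pair_shift k A B h) * sin B.
Proof.
move=> h_sB; rewrite /pair_shift -/w1 -/w2; have [w2_pos w2_le] := w2_bounds.
have dA : - (h * w2) <= cos (A + w1) - cos A <= h * w2.
  by rewrite -w1E; apply: cos_shift_le; nra.
have {}dA := mul_le_Rabs (sin B) dA.
have dB := cos_shift_descent B w2 ltac:(nra) ltac:(nra).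
have sq := Rsqr_abs (sin B); rewrite /Rsqr in sq; rewrite sq in dB.
have : 0 < w2 * (Rabs (sin B) * (Rabs (sin B) - 4 * h)).
  by apply: Rmult_lt_0_compat => //; apply: Rmult_lt_0_compat; lra.
nra.
Qed.

Lemma pair_shift_sinA : sin B = 0 -> 2 * h < Rabs (sin A) ->
  0 < (2 * cos A + 2 * cos B - pair_shift k A B h) * sin A.
Proof.
move=> sB0 h_sA; rewrite /pair_shift -/w1 -/w2; have [w2_pos w2_le] := w2_bounds.
have := cos_shift_descent A w1 ltac:(nra) ltac:(nra); rewrite {1}w1E => dA.
have dB := mul_le_Rabs (sin A) (cos_shift_flat B w2 sB0 ltac:(nra)).
have sq := Rsqr_abs (sin A); rewrite /Rsqr in sq; rewrite sq in dA.
have : w2 * w2 / 2 * Rabs (sin A) <= h * h * w2 / 2 * Rabs (sin A).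
  by apply: Rmult_le_compat_r; [exact: Rabs_pos | nra].
have : 0 < h * w2 * (Rabs (sin A) * (Rabs (sin A) - 2 * h)).
  by apply: Rmult_lt_0_compat; [nra | apply: Rmult_lt_0_compat; lra].
nra.
Qed.

End PairShift.

Lemma pair_shift_descends (k A B : R) : 1 <= k -> sin A <> 0 \/ sin B <> 0 ->
  eventually_pos (fun h => pair_shift k A B h <> 2 * cos A + 2 * cos B /\
    Rltb (pair_shift k A B h) (2 * cos A + 2 * cos B) = descends (sin A) (sin B)).
Proof.
move=> k1 sAB; set F0 := 2 * cos A + 2 * cos B.
have sign_of (s : R) h : 0 < (F0 - pair_shift k A B h) * s ->
    pair_shift k A B h <> F0 /\ Rltb (pair_shift k A B h) F0 = Rltb 0 s.
  move=> pos; split; first by move=> FE; rewrite FE Rminus_diag Rmult_0_l in pos; lra.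
  by apply/RltbP/RltbP; case: (Rle_lt_dec 0 s) => ?; nra.
rewrite /descends; case: eqP => [sB0|sB0].
  have sA0 : sin A <> 0 by case: sAB.
  have sA_pos := Rabs_pos_lt _ sA0.
  exists (Rmin 1 (Rabs (sin A) / 2)) => [|h h_lt]; first by apply: Rmin_pos; lra.
  have m1 := Rmin_l 1 (Rabs (sin A) / 2); have m2 := Rmin_r 1 (Rabs (sin A) / 2).
  by apply: sign_of; apply: pair_shift_sinA => //; lra.
have sB_pos := Rabs_pos_lt _ sB0.
exists (Rmin 1 (Rabs (sin B) / 4)) => [|h h_lt]; first by apply: Rmin_pos; lra.
have m1 := Rmin_l 1 (Rabs (sin B) / 4); have m2 := Rmin_r 1 (Rabs (sin B) / 4).
by apply: sign_of; apply: pair_shift_sinB => //; lra.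
Qed.

Lemma pair_shift_crossing (k A B E : R) : 1 <= k ->
  (sin A = 0 -> sin B = 0 -> 2 * cos A + 2 * cos B <> E) ->
  eventually_pos (fun h => pair_shift k A B h <> E /\
    Rltb (pair_shift k A B h) E
    = Rltb (2 * cos A + 2 * cos B) E
      || (2 * cos A + 2 * cos B == E) && descends (sin A) (sin B)).
Proof.
move=> k1 nondeg; set F0 := 2 * cos A + 2 * cos B.
have [F0E|F0E] := Req_dec F0 E.
  have sAB : sin A <> 0 \/ sin B <> 0.
    by case: (Req_dec (sin A) 0) => [sA0|]; [right => sB0; exact: nondeg sA0 sB0 F0E | left].
  rewrite -F0E.
  have [d d_pos dP] := pair_shift_descends k A B k1 sAB.
  exists d => // h /dP [FE ->]; split=> //.
  by rewrite eqxx (introF (RltbP _ _) (Rlt_irrefl F0)).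
have gap := Rabs_pos_lt (F0 - E) ltac:(lra).
exists (Rmin 1 (Rabs (F0 - E) / 8)) => [|h h_lt]; first by apply: Rmin_pos; lra.
have m1 := Rmin_l 1 (Rabs (F0 - E) / 8); have m2 := Rmin_r 1 (Rabs (F0 - E) / 8).
have h01 : 0 < h <= 1 by lra.
have [near1 near2] := pair_shift_near k A B h k1 h01.
rewrite -/F0 in near1 near2; rewrite (introF eqP F0E) orbF.
have : h < Rabs (F0 - E) / 8 by lra.
rewrite /Rabs; case: Rcase_abs => F0E_sign hd.
  have FE : pair_shift k A B h < E by lra.
  have F0lt : F0 < E by lra.
  by split; [lra | rewrite (introT (RltbP _ _) FE) (introT (RltbP _ _) F0lt)].
have FE : ~ pair_shift k A B h < E by lra.
have F0ge : ~ F0 < E by lra.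
by split; [lra | rewrite (introF (RltbP _ _) FE) (introF (RltbP _ _) F0ge)].
Qed.

(** * Parity of the eigenvalues leaving E downwards *)

Section DescendingPairsParity.
Variables (r : nat) (c s : nat -> R) (E : R) (f : nat -> nat).
Hypotheses (E_neg : E < 0) (c_bound : forall j, -1 <= c j <= 1)
  (s_eq0 : forall j, s j = 0 -> c j = 1 \/ c j = -1)
  (f_lt : forall j, (j < r)%N -> (f j < r)%N)
  (f_inv : forall j, (j < r)%N -> f (f j) = j)
  (f_sym : forall j, (j < r)%N -> c (f j) = c j /\ s (f j) = - s j).

Definition level_count (v : R) (P : pred R) : nat :=
  \sum_(j < r) ((c j == v) && P (s j)).

Let pos : pred R := Rltb 0.
Let neg : pred R := Rltb ^~ 0.
Let zero : pred R := pred1 0.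

Lemma level_count_pos_neg (v : R) : level_count v pos = level_count v neg.
Proof.
pose fo (j : 'I_r) : 'I_r := Ordinal (f_lt _ (ltn_ord j)).
have fo_inj : injective fo.
  move=> a b /(congr1 val) /= fab; apply: val_inj => /=.
  by rewrite -(f_inv _ (ltn_ord a)) -(f_inv _ (ltn_ord b)) fab.
rewrite /level_count (reindex_inj fo_inj); apply: eq_bigr => j _ /=.
have [-> ->] := f_sym _ (ltn_ord j).
by congr (nat_of_bool (_ && _)); apply/RltbP/RltbP; lra.
Qed.

Lemma level_count_split (v : R) : level_count v predT
  = (level_count v pos + level_count v neg + level_count v zero)%N.
Proof.
rewrite /level_count -!big_split /=; apply: eq_bigr => j _.
rewrite /pos /neg /zero /=; case: (c j == v) => //=.
by case: (RltbP 0 (s j)) => ?; case: (RltbP (s j) 0) => ?; case: eqP => ? //=; lra.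
Qed.

Lemma level_count_below (v : R) (P : pred R) : v < -1 -> level_count v P = 0%N.
Proof.
by move=> v_lt; rewrite /level_count big1 // => j _; case: eqP => // cj; have := c_bound j; lra.
Qed.

Lemma level_count_zero (v : R) : v <> -1 -> v < 1 -> level_count v zero = 0%N.
Proof.
move=> v1 v_lt; rewrite /level_count /zero big1 // => j _.
by case: eqP => //= cj; case: eqP => //= /s_eq0; lra.
Qed.

Definition descending_pair (j k : nat) : bool :=
  (2 * c j + 2 * c k == E) && descends (s j) (s k).

Definition descending_row (k : nat) : nat := \sum_(j < r) descending_pair j k.

(* On the level set 2 c j + 2 c k = E one has c j = partner (c k). *)
Let partner (v : R) : R := E / 2 - v.
Let bottom : R := -1.

(* Rows with s k > 0 pair the levels s j > 0 and s j < 0, which are equinumerous;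
   what is left are the rows through the level c = -1, counted twice. *)
Lemma descending_row_eq (k : nat) : descending_row k
  = (2 * (pos (s k) * level_count (partner (c k)) pos)
     + (pos (s k) && (c k == partner bottom)) * level_count bottom zero
     + (zero (s k) && (c k == bottom)) * level_count (partner bottom) pos)%N.
Proof.
have ck := c_bound k; rewrite /partner /bottom /pos /zero /=.
have levelE j : (2 * c j + 2 * c k == E) = (c j == E / 2 - c k).
  by apply/eqP/eqP; lra.
rewrite /descending_row /descending_pair /descends; under eq_bigr do rewrite levelE.
case: eqP => [sk0|sk0].
  rewrite -[\sum_(j < r) _]/(level_count (E / 2 - c k) (Rltb 0)).
  rewrite (_ : Rltb 0 (s k) = false) ?mul0n ?add0n; last by apply/RltbP; lra.
  have [ck1|ck1] := s_eq0 _ sk0.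
    rewrite (introF eqP (_ : c k <> -1)) ?mul0n; last lra.
    by apply: level_count_below; lra.
  by rewrite ck1 eqxx mul1n.
case: (RltbP 0 (s k)) => sk_pos; last by rewrite big1 // => j _; rewrite andbF.
rewrite mul1n /= -[X in X = _]/(level_count (E / 2 - c k) predT) level_count_split.
rewrite -level_count_pos_neg /pos /neg /zero /=.
have [ckE|ckE] := eqVneq (c k) (E / 2 - -1).
  by rewrite mul1n (_ : E / 2 - c k = -1); [lia | rewrite ckE; field].
rewrite mul0n addn0 level_count_zero; [lia | | lra].
by move=> ckE'; move/eqP: ckE; apply; lra.
Qed.

Lemma descending_pairs_even : ~~ odd (\sum_(k < r) descending_row k).
Proof.
under eq_bigr do rewrite descending_row_eq.
have sum_top : (\sum_(k < r) (pos (s k) && (c k == partner bottom)) * level_count bottom zero)%N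
        = (level_count (partner bottom) pos * level_count bottom zero)%N.
  by rewrite -big_distrl; congr muln; apply: eq_bigr => k _; rewrite andbC.
have sum_bottom : (\sum_(k < r) (zero (s k) && (c k == bottom))
                     * level_count (partner bottom) pos)%N
        = (level_count bottom zero * level_count (partner bottom) pos)%N.
  by rewrite -big_distrl; congr muln; apply: eq_bigr => k _; rewrite andbC.
rewrite !big_split /= big1_eq sum_top sum_bottom addn0 addnn -addnA.
by rewrite (mulnC (level_count bottom zero)) addnn oddD !odd_double.
Qed.

End DescendingPairsParity.

(** * Crossing the level E *)

Lemma cos_pm1 (x : R) : sin x = 0 -> cos x = 1 \/ cos x = -1.
Proof.
move=> sx0; have := sin2_cos2 x; rewrite /Rsqr sx0 => cs.
have /Rmult_integral [] : (cos x - 1) * (cos x + 1) = 0 by nra.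
  by left; lra.
by right; lra.
Qed.

Lemma sin_sign_mul (sg x : R) : sg = 1 \/ sg = -1 -> sin (sg * x) = sg * sin x.
Proof.
case=> ->; first by rewrite !Rmult_1_l.
by rewrite (_ : -1 * x = - x) ?sin_neg; ring.
Qed.

Lemma cos_sign_mul (sg x : R) : sg = 1 \/ sg = -1 -> cos (sg * x) = cos x.
Proof.
case=> ->; first by rewrite Rmult_1_l.
by rewrite (_ : -1 * x = - x) ?cos_neg; last ring.
Qed.

Lemma cos_sign_shift (sg x w : R) : sg = 1 \/ sg = -1 -> cos (sg * x + w) = cos (x + sg * w).
Proof.
case=> ->; first by rewrite !Rmult_1_l.
by rewrite -cos_neg; congr cos; ring.
Qed.

Lemma fourier_angle_shift (r : nat) (t x : R) (j : nat) : (0 < r)%N ->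
  fourier_angle r (t + x) j = fourier_angle r t j + x / INR r.
Proof. by move=> r0; rewrite /fourier_angle; field; apply: INR_neq0. Qed.

Section Crossing.
Variables (r : nat) (t0 sg E : R) (f : nat -> nat).
Hypotheses (r1 : (1 < r)%N) (sg1 : sg = 1 \/ sg = -1)
  (E_neg : E < 0) (E_m4 : E <> -4) (E_0 : E <> 0)
  (f_lt : forall j, (j < r)%N -> (f j < r)%N)
  (f_inv : forall j, (j < r)%N -> f (f j) = j)
  (f_sym : forall j, (j < r)%N ->
     cos (fourier_angle r t0 (f j)) = cos (fourier_angle r t0 j) /\
     sin (fourier_angle r t0 (f j)) = - sin (fourier_angle r t0 j))
  (E_lt_eigval0 : E < DeltaG_eigval r t0 t0 0).

Let angle (n : nat) : R := fourier_angle r t0 n.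
Let t (h : R) : R := t0 + sg * (h * h * h).
Let p (h : R) : R := t0 + sg * (h * h).
Let slope (n : nat) : R := sg * sin (angle n).

Definition descending_eigval (n : nat) : bool :=
  (DeltaG_eigval r t0 t0 n == E) && descends (slope (n %/ r)) (slope (n %% r)).

Lemma DeltaG_eigval_curve (h : R) (n : nat) : DeltaG_eigval r (t h) (p h) n
  = pair_shift (INR r) (sg * angle (n %/ r)) (sg * angle (n %% r)) h.
Proof.
have r0 : (0 < r)%N by apply: ltn_trans r1.
rewrite /DeltaG_eigval /fourier_eigval /pair_shift /t /p !fourier_angle_shift //.
by rewrite !(cos_sign_shift sg) // !Rmult_div_assoc.
Qed.

Lemma DeltaG_eigval_base (n : nat) : DeltaG_eigval r t0 t0 n
  = 2 * cos (sg * angle (n %/ r)) + 2 * cos (sg * angle (n %% r)).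
Proof. by rewrite !(cos_sign_mul sg). Qed.

Lemma cos_angle_level (a b : nat) : sin (angle a) = 0 -> sin (angle b) = 0 ->
  2 * cos (angle a) + 2 * cos (angle b) <> E.
Proof.
by move=> /cos_pm1 [] -> /cos_pm1 [] ->; lra.
Qed.

Lemma curve_crossing : eventually_pos (fun h => forall n, (n < r * r)%N ->
  DeltaG_eigval r (t h) (p h) n <> E /\
  Rltb (DeltaG_eigval r (t h) (p h) n) E
  = Rltb (DeltaG_eigval r t0 t0 n) E || descending_eigval n).
Proof.
apply: eventually_pos_forall => n _.
have r_ge1 : 1 <= INR r by apply/(le_INR 1)/leP/ltnW.
have nondeg : sin (sg * angle (n %/ r)) = 0 -> sin (sg * angle (n %% r)) = 0 ->
    2 * cos (sg * angle (n %/ r)) + 2 * cos (sg * angle (n %% r)) <> E.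
  rewrite !(sin_sign_mul sg) // !(cos_sign_mul sg) //.
  by move=> /Rmult_integral [|sa0]; [case: sg1; lra | move=> /Rmult_integral [|];
    [case: sg1; lra | exact: cos_angle_level]].
have [d d_pos dP] := pair_shift_crossing _ _ _ _ r_ge1 nondeg.
exists d => // h /dP.
by rewrite DeltaG_eigval_curve /descending_eigval DeltaG_eigval_base /slope !(sin_sign_mul sg).
Qed.

Lemma count_lt_curve (h : R) :
  (forall n, (n < r * r)%N -> Rltb (DeltaG_eigval r (t h) (p h) n) E
     = Rltb (DeltaG_eigval r t0 t0 n) E || descending_eigval n) ->
  count (Rltb ^~ E) (DeltaG_spectrum r (t h) (p h))
  = (count (Rltb ^~ E) (DeltaG_spectrum r t0 t0) + \sum_(n < r * r) descending_eigval n)%N.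
Proof.
move=> cross; rewrite !count_lt_DeltaG_spectrum -big_split /=.
apply: eq_bigr => n _; rewrite cross // /descending_eigval.
by case: (RltbP _ E) => [lt|] //=; rewrite (introF eqP (Rlt_not_eq _ _ lt)).
Qed.

Lemma descending_eigvals_even : ~~ odd (\sum_(n < r * r) descending_eigval n).
Proof.
pose c j := cos (angle j).
have -> : (\sum_(n < r * r) descending_eigval n)%N
          = (\sum_(k < r) descending_row r c slope E k)%N.
  rewrite (@big_ord_mul_pair _ _ _ _ (fun n => (descending_eigval n : nat))) exchange_big.
  apply: eq_bigr => b _; apply: eq_bigr => a _.
  by rewrite /descending_eigval /descending_pair /DeltaG_eigval /fourier_eigval divn_pair ?modn_pair.
apply: (descending_pairs_even r c slope E f E_neg _ _ f_lt f_inv) => [j|j|j jr].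
- exact: COS_bound.
- by rewrite /slope => /Rmult_integral [|/cos_pm1 //]; case: sg1; lra.
- by have [cE sE] := f_sym j jr; rewrite /c /slope /angle cE sE; split; [|ring].
Qed.

Lemma DeltaG_curve_gap (base : nat) :
  count (Rltb ^~ E) (DeltaG_spectrum r t0 t0) = base ->
  exists h, 0 < h < 1 /\ exists n,
    (base + 2 * n + 1 <= r * r)%N /\
    ((base + 2 * n)%N = 0%N \/ lamG r (t h) (p h) (base + 2 * n) < E) /\
    E < lamG r (t h) (p h) (base + 2 * n + 1).
Proof.
move=> base_count; have [h [h01 cross]] := eventually_pos_small _ curve_crossing.
exists h; split=> //; exists (\sum_(n < r * r) descending_eigval n)./2.
set S := DeltaG_spectrum r (t h) (p h).
have countE : count (Rltb ^~ E) S = (base + 2 * (\sum_(n < r * r) descending_eigval n)./2)%N.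
  rewrite count_lt_curve => [|n nr]; last exact: (cross n nr).2.
  by rewrite base_count mul2n -[in LHS](odd_double_half (\sum_(n < r * r) _))
    (negbTE descending_eigvals_even).
have rr0 : (0 < r * r)%N by rewrite muln_gt0 andbb (ltn_trans _ r1).
have E_notin : E \notin S.
  apply/negP; rewrite /S /DeltaG_spectrum mem_sort => /mapP [n].
  by rewrite mem_iota add0n => /andP[_ nr] /esym; apply: (cross n nr).1.
have count_lt : (count (Rltb ^~ E) S < size S)%N.
  rewrite -[X in (_ < X)%N](count_predC (Rltb ^~ E)) -addn1 leq_add2l -has_count.
  apply/hasP; exists (DeltaG_eigval r (t h) (p h) 0).
    by rewrite /S /DeltaG_spectrum mem_sort; apply: map_f; rewrite mem_iota.
  rewrite /= (cross 0%N rr0).2 (introF (RltbP _ _) (Rlt_asym _ _ E_lt_eigval0)).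
  by rewrite /descending_eigval (introF eqP (Rgt_not_eq _ _ E_lt_eigval0)).
rewrite countE size_DeltaG_spectrum in count_lt.
have [low high] := count_lt_gap _ _ (sorted_DeltaG_spectrum r (t h) (p h)) _ countE E_notin
  ltac:(by rewrite size_DeltaG_spectrum).
by rewrite !lamG_spectrum // addn1.
Qed.

End Crossing.

(* Reflections j -> -j (at t = 0) and j -> -1 - j (at t = pi) of the index
   set Z/rZ map the angle x to 2 pi - x. *)
Lemma fourier_angle_reflect (r : nat) (t : R) (j j' : nat) : (0 < r)%N ->
  t + (INR j + INR j') * PI = INR r * PI ->
  cos (fourier_angle r t j') = cos (fourier_angle r t j) /\
  sin (fourier_angle r t j') = - sin (fourier_angle r t j).
Proof.
move=> r0 jj'; have r0R := INR_neq0 r0.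
have -> : fourier_angle r t j' = 2 * PI + - fourier_angle r t j.
  apply: (Rmult_eq_reg_r (INR r)) => //; rewrite /fourier_angle.
  by field_simplify => //; nra.
by rewrite cos_plus sin_plus cos_2PI sin_2PI cos_neg sin_neg; split; ring.
Qed.

Lemma reflect0_sym (r j : nat) : (0 < r)%N -> (j < r)%N ->
  cos (fourier_angle r 0 ((r - j) %% r)) = cos (fourier_angle r 0 j) /\
  sin (fourier_angle r 0 ((r - j) %% r)) = - sin (fourier_angle r 0 j).
Proof.
move=> r0 jr; case: j jr => [|j] jr.
  rewrite subn0 modnn /fourier_angle Rmult_0_r Rmult_0_l Rplus_0_l /Rdiv Rmult_0_l sin_0.
  by split; [|ring].
apply: fourier_angle_reflect => //.
rewrite modn_small ?ltn_subrL // minus_INR; [ring | exact/leP/ltnW].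
Qed.

Lemma reflect0_inv (r j : nat) : (0 < r)%N -> (j < r)%N -> ((r - (r - j) %% r) %% r)%N = j.
Proof.
move=> r0 jr; case: j jr => [|j] jr; first by rewrite subn0 modnn subn0 modnn.
by rewrite (modn_small (m := (r - j.+1)%N)) ?ltn_subrL // subKn ?modn_small // ltnW.
Qed.

Lemma reflectPI_sym (r j : nat) : (0 < r)%N -> (j < r)%N ->
  cos (fourier_angle r PI (r - j.+1)) = cos (fourier_angle r PI j) /\
  sin (fourier_angle r PI (r - j.+1)) = - sin (fourier_angle r PI j).
Proof.
move=> r0 jr; apply: fourier_angle_reflect => //.
by rewrite minus_INR; [rewrite S_INR; ring | exact/leP].
Qed.

Lemma DeltaG_eigval0_at0 (r : nat) : (0 < r)%N -> DeltaG_eigval r 0 0 0 = 4.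
Proof.
move=> r0; rewrite /DeltaG_eigval /fourier_eigval div0n mod0n /fourier_angle.
by rewrite Rmult_0_r Rmult_0_l Rplus_0_l /Rdiv Rmult_0_l cos_0; ring.
Qed.

Lemma DeltaG_eigval0_atPI (r : nat) : (1 < r)%N -> 0 <= DeltaG_eigval r PI PI 0.
Proof.
move=> r1; have r2 : 2 <= INR r by apply/(le_INR 2)/leP.
rewrite /DeltaG_eigval /fourier_eigval div0n mod0n /fourier_angle Rmult_0_r Rmult_0_l Rplus_0_r.
have PIr : PI / INR r <= PI / 2.
  by apply: Rmult_le_compat_l; [have := PI_RGT_0; lra | apply: Rinv_le_contravar; lra].
have PIr0 : 0 < PI / INR r by apply: Rdiv_lt_0_compat; [exact: PI_RGT_0 | lra].
have := cos_ge_0 (PI / INR r) ltac:(lra) PIr; lra.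
Qed.

Theorem mainTheorem8 (r : nat) (E : R) (l m : nat)
  (Hr : (0 < r)%N) (Hev : ~~ odd r)
  (HEC : exists j1 j2 : nat, (j1 <= r)%N /\ (j2 <= r)%N /\
           E = 2 * cos (PI * INR j1 / INR r) + 2 * cos (PI * INR j2 / INR r))
  (HEm4 : E <> -4) (HE0 : E <> 0) (HE4 : E <> 4) (HEneg : E < 0)
  (Hl1 : (1 <= l)%N) (Hlr : (l <= r * r)%N) (Hl : lamG r 0 0 l < E)
  (Hlmax : forall k : nat, (l < k)%N -> (k <= r * r)%N -> ~ lamG r 0 0 k < E)
  (Hmr : (m <= r * r)%N) (Hm : m = 0%N \/ lamG r PI PI m < E)
  (Hmmax : forall k : nat, (m < k)%N -> (k <= r * r)%N -> ~ lamG r PI PI k < E) :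
  exists (t1 p1 t2 p2 : R) (n1 n2 : nat),
    0 <= t1 <= PI /\ 0 <= p1 <= PI /\ 0 <= t2 <= PI /\ 0 <= p2 <= PI /\
    (l + 2 * n1 + 1 <= r * r)%N /\
    lamG r t1 p1 (l + 2 * n1) < E /\ E < lamG r t1 p1 (l + 2 * n1 + 1) /\
    (m + 2 * n2 + 1 <= r * r)%N /\
    ((m + 2 * n2)%N = 0%N \/ lamG r t2 p2 (m + 2 * n2) < E) /\
    E < lamG r t2 p2 (m + 2 * n2 + 1).
Proof.
have r1 : (1 < r)%N by case: r Hr Hev {HEC Hlr Hl Hlmax Hmr Hm Hmmax} => [|[|r]].
have E_lt_at0 : E < DeltaG_eigval r 0 0 0 by rewrite DeltaG_eigval0_at0 //; lra.
have E_lt_atPI : E < DeltaG_eigval r PI PI 0 by have := DeltaG_eigval0_atPI r r1; lra.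
have [h1 [h1_01 [n1 [bound1 [low1 high1]]]]] :=
  DeltaG_curve_gap r 0 1 E (fun j => (r - j) %% r)%N r1 (or_introl erefl) HEneg HEm4 HE0
    (fun j _ => ltn_pmod _ Hr) (fun j => reflect0_inv r j Hr) (fun j => reflect0_sym r j Hr)
    E_lt_at0 l (count_lt_lamG r 0 E l r1 Hlr (or_intror Hl) Hlmax).
have [h2 [h2_01 [n2 [bound2 [low2 high2]]]]] :=
  DeltaG_curve_gap r PI (-1) E (fun j => r - j.+1)%N r1 (or_intror erefl) HEneg HEm4 HE0
    (fun j _ => ltac:(by rewrite ltn_subrL Hr)) (fun j jr => ltac:(lia))
    (fun j => reflectPI_sym r j Hr) E_lt_atPI m (count_lt_lamG r PI E m r1 Hmr Hm Hmmax).
have := PI2_1.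
exists (0 + 1 * (h1 * h1 * h1)), (0 + 1 * (h1 * h1)),
       (PI + -1 * (h2 * h2 * h2)), (PI + -1 * (h2 * h2)), n1, n2.
do 4 (split; first nra).
split; first exact: bound1.
split; last by [].
by case: low1 => // l0; move: l0 Hl1; lia.
Qed.
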